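(* For every integer $k\ge 1$ let $P_k$ be the $2^k\times 2^k$ matrix with $(i,j)$-entry $1$ if there is $n\in\{1,\dots,2^k\}$ with $i=\sigma^{-1}_{2^k}(n+1)$ and $j=\sigma^{-1}_{2^k}(n)$ (convention $\sigma^{-1}_{2^k}(2^k+1)=\sigma^{-1}_{2^k}(1)$), and $0$ otherwise. Define matrices $N_k$ by $N_1=I^*_2$, $N_2=\begin{pmatrix}0 & I_2\\ I^*_2 & 0\end{pmatrix}$ and, for $k\ge 3$, $$N_k=\begin{pmatrix}0_{2^{k-1}} & \begin{pmatrix} N_{k-2} & 0\\ 0 & I_{2^{k-2}}\end{pmatrix}\\ I^*_{2^{k-1}} & 0_{2^{k-1}}\end{pmatrix},$$ all blocks in the outer matrix being of size $2^{k-1}\times 2^{k-1}$. That is, the matrix has the nested form: its lower-left $2^{k-1}$ block is $I^*_{2^{k-1}}$, its upper-right $2^{k-1}$ block is block-diagonal with lower diagonal block $I_{2^{k-2}}$ and upper diagonal block of the same nested form of size $2^{k-2}$, and so on, the innermost block being $\begin{pmatrix}0&I_2\\ I^*_2&0\end{pmatrix}$ when $k$ is even and $I^*_2=\begin{pmatrix}0&1\\1&0\end{pmatrix}$ when $k$ is odd. Then $P_k=N_k$ for every $k\ge 1$.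
   Context: For every integer $k\ge 0$ the map $\sigma^{-1}_{2^k}:\{1,\dots,2^k\}\to\{1,\dots,2^k\}$ is defined recursively by $\sigma^{-1}_{2^0}(1)=1$ and, for $k\ge 1$ and $1\le n\le 2^{k-1}$, $\sigma^{-1}_{2^k}(2n-1)=\sigma^{-1}_{2^{k-1}}(n)$ and $\sigma^{-1}_{2^k}(2n)=2^k+1-\sigma^{-1}_{2^{k-1}}(n)$; it is a permutation of $\{1,\dots,2^k\}$ (the inverse of the permutation encoding the ordering of the superstable $2^k$-periodic orbit of a period-doubling cascade of a unimodal map). The matrix $P_k$ is called the matrix representation of the period-doubling cascade. For $r\ge 1$, $I_r$ is the $r\times r$ identity matrix, $0_r$ the $r\times r$ zero matrix, and $I^*_r=(a_{ij})$ the $r\times r$ matrix with $a_{ij}=1$ if $i+j=r+1$ and $a_{ij}=0$ otherwise. *)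

From HB Require Import structures.
From mathcomp Require Import all_boot all_order all_algebra.
Set Implicit Arguments. Unset Strict Implicit. Unset Printing Implicit Defensive.
Import GRing.Theory.
Local Open Scope ring_scope.

(* sigma_inv k n = sigma^{-1}_{2^k}(n), for 1 <= n <= 2^k (1-based values). *)
Fixpoint sigma_inv (k n : nat) : nat :=
  match k with
  | 0 => 1
  | k'.+1 => if odd n then sigma_inv k' (n.+1 %/ 2)%N
             else ((2 ^ k'.+1).+1 - sigma_inv k' (n %/ 2))%N
  end.

Definition cyc_succ (k n : nat) : nat := (if n == 2 ^ k then 1 else n.+1)%N.

(* P_k, with 0-based matrix indices: entry (i,j) of 'M_(2^k) is the paper's
   entry (i+1, j+1). *)
Definition Pmat (R : nzRingType) (k : nat) : 'M[R]_(2 ^ k) :=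
  \matrix_(i, j)
    (([exists n : 'I_(2 ^ k),
        ((i.+1 == sigma_inv k (cyc_succ k n.+1)) &&
         (j.+1 == sigma_inv k n.+1))%N]) %:R).

Definition antiI (R : nzRingType) (r : nat) : 'M[R]_r :=
  \matrix_(i, j) ((i + j == r.-1)%N %:R).

Lemma pow2_dbl (m : nat) : (2 ^ m + 2 ^ m = 2 ^ m.+1)%N.
Proof. by rewrite expnS mul2n addnn. Qed.

Definition N1 (R : nzRingType) : 'M[R]_(2 ^ 1) := antiI R 2.

Definition N2 (R : nzRingType) : 'M[R]_(2 ^ 2) :=
  castmx (pow2_dbl 1, pow2_dbl 1)
    (block_mx (0 : 'M[R]_(2 ^ 1)) (1%:M) (antiI R (2 ^ 1)) 0).

(* from a = N_{m+1} build N_{m+3} *)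
Definition Nstep (R : nzRingType) (m : nat) (a : 'M[R]_(2 ^ m.+1)) : 'M[R]_(2 ^ m.+3) :=
  castmx (pow2_dbl m.+2, pow2_dbl m.+2)
    (block_mx (0 : 'M[R]_(2 ^ m.+2))
              (castmx (pow2_dbl m.+1, pow2_dbl m.+1)
                 (block_mx a 0 0 (1%:M : 'M[R]_(2 ^ m.+1))))
              (antiI R (2 ^ m.+2)) 0).

(* Naux k = (N_{k+1}, N_{k+2}) *)
Fixpoint Naux (R : nzRingType) (k : nat) : 'M[R]_(2 ^ k.+1) * 'M[R]_(2 ^ k.+2) :=
  match k with
  | 0 => (N1 R, N2 R)
  | k'.+1 => let p := Naux R k' in (p.2, Nstep p.1)
  end.

(* Nmat R k = N_{k+1} *)
Definition Nmat (R : nzRingType) (k : nat) : 'M[R]_(2 ^ k.+1) := (Naux R k).1.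

From mathcomp Require Import all_boot all_order all_algebra zify.

(* Both sides are the 0/1 matrix of one map on 0-based indices: [next_index k]
   sends sigma^{-1}(n) - 1 to sigma^{-1}(n+1) - 1.  The recursion for sigma^{-1}
   gives next_index (k+1) j = 2^(k+1) - 1 - j for j < 2^k (the anti-identity
   block) and next_index k (2^(k+1) - 1 - j) otherwise; unfolding this second
   case once more splits the upper-right block into N_(k-1) and an identity
   block, which is exactly the recursion defining N_(k+1). *)

Fixpoint next_index (k j : nat) : nat :=
  match k with
  | 0 => 0
  | k'.+1 => if j < 2 ^ k' then 2 ^ k'.+1 - 1 - j
             else next_index k' (2 ^ k'.+1 - 1 - j)
  end.

Lemma next_indexS k j : next_index k.+1 j =
  if j < 2 ^ k then 2 ^ k.+1 - 1 - j else next_index k (2 ^ k.+1 - 1 - j).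
Proof. by []. Qed.

Lemma next_index_lt k j : j < 2 ^ k -> next_index k j < 2 ^ k.
Proof.
elim: k j => [|k IHk] j //=; rewrite expnS => lt_j.
by case: ifP => lt_jk; [lia | have := IHk (2 * 2 ^ k - 1 - j); lia].
Qed.

Lemma next_indexSS n j : 2 ^ n.+1 <= j < 2 ^ n.+2 ->
  next_index n.+2 j =
  if j - 2 ^ n.+1 < 2 ^ n then next_index n (j - 2 ^ n.+1) else j - 2 ^ n.+1.
Proof.
have := expnS 2 n.+1; have := expnS 2 n => e1 e2 j_range.
rewrite next_indexS ifF; last lia.
rewrite next_indexS; do 2 case: ifP => ?; try congr next_index; lia.
Qed.

Local Open Scope ring_scope.

Lemma natr_neq (R : nzRingType) (a b : nat) : a <> b -> (a == b)%:R = 0 :> R.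
Proof. by move/eqP/negbTE->. Qed.

Definition fun_mx (R : nzRingType) n (f : nat -> nat) : 'M[R]_n :=
  \matrix_(i, j) (i == f j :> nat)%:R.

Lemma castmx_block_mxE {R : Type} {m1 m2 n1 n2 m n : nat}
    {em : (m1 + m2 = m)%N} {en : (n1 + n2 = n)%N}
    {A : 'M[R]_(m1, n1)} {B : 'M_(m1, n2)} {C : 'M_(m2, n1)} {D : 'M_(m2, n2)}
    {FA FB FC FD : nat -> nat -> R}
    (hA : forall a b, A a b = FA a b) (hB : forall a b, B a b = FB a b)
    (hC : forall a b, C a b = FC a b) (hD : forall a b, D a b = FD a b)
    (i : 'I_m) (j : 'I_n) :
  castmx (em, en) (block_mx A B C D) i j =
  if (i < m1)%N then (if (j < n1)%N then FA i j else FB i (j - n1)%N)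
  else (if (j < n1)%N then FC (i - m1)%N j else FD (i - m1)%N (j - n1)%N).
Proof.
rewrite castmxE block_mxEv /col_mx /row_mx !mxE.
case: splitP => a /= ->; rewrite !mxE;
  case: splitP => b /= ->; rewrite ?hA ?hB ?hC ?hD ?ltn_ord //;
  by rewrite !ltnNge !leq_addr /= !addKn.
Qed.

Lemma N1_fun_mx (R : nzRingType) : N1 R = fun_mx R _ (next_index 1).
Proof.
apply/matrixP => -[i lt_i] [j lt_j]; rewrite !mxE; congr _%:R.
by case: i j lt_i lt_j => [|[|?]] [|[|?]].
Qed.

Lemma N2_fun_mx (R : nzRingType) : N2 R = fun_mx R _ (next_index 2).
Proof.
apply/matrixP => -[i lt_i] [j lt_j].
rewrite (castmx_block_mxE (FA := fun _ _ => 0) (FB := fun a b => (a == b)%:R)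
  (FC := fun a b => (a + b == 1)%N%:R) (FD := fun _ _ => 0)) => [|a b|a b|a b|a b];
  rewrite !mxE //.
by case: i j lt_i lt_j => [|[|[|[|?]]]] [|[|[|[|?]]]].
Qed.

Lemma block_diag_fun_mx (R : nzRingType) m1 m2 m (em : (m1 + m2 = m)%N)
    (f : nat -> nat) : {in gtn m1, forall b, f b < m1}%N ->
  castmx (em, em) (block_mx (fun_mx R m1 f) 0 0 1%:M) =
  fun_mx R m (fun b => if (b < m1)%N then f b else b).
Proof.
move=> f_lt; apply/matrixP => i j.
rewrite (castmx_block_mxE (FA := fun a b => (a == f b)%:R) (FB := fun _ _ => 0)
  (FC := fun _ _ => 0) (FD := fun a b => (a == b)%:R)) => [|a b|a b|a b|a b];
  rewrite !mxE //.
have [lt_j|ge_j] := ltnP j m1; have [lt_i|ge_i] := ltnP i m1 => //.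
- by rewrite natr_neq //; have := f_lt j lt_j; lia.
- by rewrite natr_neq //; lia.
- by congr _%:R; apply/eqP/eqP; lia.
Qed.

Lemma Nstep_fun_mx (R : nzRingType) k :
  Nstep (fun_mx R (2 ^ k.+1) (next_index k.+1)) = fun_mx R _ (next_index k.+3).
Proof.
apply/matrixP => i j; rewrite /Nstep block_diag_fun_mx => [|b]; last exact: next_index_lt.
set g := fun b => if (b < 2 ^ k.+1)%N then next_index k.+1 b else b.
rewrite (castmx_block_mxE (FA := fun _ _ => 0) (FB := fun a b => (a == g b)%:R)
  (FC := fun a b => (a + b == (2 ^ k.+2).-1)%N%:R) (FD := fun _ _ => 0))
  => [|a b|a b|a b|a b]; rewrite ?mxE //.
have := expnS 2 k.+2; have := expnS 2 k.+1; have := ltn_ord i; have := ltn_ord j.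
move=> lt_j lt_i e1 e2; have [lt_j2|ge_j2] := ltnP j (2 ^ k.+2).
  rewrite next_indexS lt_j2; case: ifP => lt_i2; last by congr _%:R; apply/eqP/eqP; lia.
  by rewrite natr_neq //; lia.
rewrite next_indexSS; last lia.
case: ifP => // ge_i2; rewrite natr_neq //.
have := @next_index_lt k.+1 (j - 2 ^ k.+2); rewrite /g; case: ifP; lia.
Qed.

Lemma Naux_fun_mx (R : nzRingType) k :
  Naux R k = (fun_mx R _ (next_index k.+1), fun_mx R _ (next_index k.+2)).
Proof.
elim: k => [|k IHk] /=; first by rewrite N1_fun_mx N2_fun_mx.
by rewrite IHk /= Nstep_fun_mx.
Qed.

Local Close Scope ring_scope.

Lemma sigma_invS k n : sigma_inv k.+1 n =
  if odd n then sigma_inv k (n.+1 %/ 2) else (2 ^ k.+1).+1 - sigma_inv k (n %/ 2).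
Proof. by []. Qed.

Lemma sigma_inv_range k n : 0 < n <= 2 ^ k -> 0 < sigma_inv k n <= 2 ^ k.
Proof.
elim: k n => [|k IHk] n // n_range; rewrite sigma_invS expnS.
move: n_range; rewrite expnS; case: ifP => odd_n n_range.
- by have := IHk (n.+1 %/ 2); lia.
- by have := IHk (n %/ 2); lia.
Qed.

Lemma sigma_inv_onto k j : j < 2 ^ k -> exists2 n, 0 < n <= 2 ^ k & sigma_inv k n = j.+1.
Proof.
elim: k j => [|k IHk] j lt_j; first by exists 1 => //; move: lt_j; rewrite expn0 ltnS leqn0 => /eqP ->.
have pos_k : 0 < 2 ^ k by rewrite expn_gt0.
have e := expnS 2 k.
have [lt_jk|ge_jk] := ltnP j (2 ^ k).
- have [m m_range sm] := IHk j lt_jk.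
  exists (2 * m).-1; first lia.
  rewrite sigma_invS; have -> : odd (2 * m).-1 by lia.
  by rewrite prednK ?mulKn; lia.
- have [m m_range sm] := IHk (2 ^ k.+1 - 1 - j) ltac:(lia).
  exists (2 * m); first lia.
  by rewrite sigma_invS oddM /= mulKn // sm; lia.
Qed.

Lemma sigma_inv_cyc_succ k n : 0 < n <= 2 ^ k ->
  sigma_inv k (cyc_succ k n) = (next_index k (sigma_inv k n).-1).+1.
Proof.
elim: k n => [|k IHk] n; first by rewrite /cyc_succ; case: n => [|[]].
move=> n_range; have pos_k : 0 < 2 ^ k by rewrite expn_gt0.
have e := expnS 2 k.
rewrite [sigma_inv k.+1 n]sigma_invS next_indexS.
have [odd_n|even_n] := boolP (odd n).
- have := sigma_inv_range k (n.+1 %/ 2) ltac:(lia).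
  rewrite /cyc_succ ifF; last lia.
  by move=> s_range; rewrite sigma_invS /= odd_n /= ifT; lia.
- have := sigma_inv_range k (n %/ 2) ltac:(lia) => s_range.
  rewrite ifF; last lia.
  have -> : 2 ^ k.+1 - 1 - ((2 ^ k.+1).+1 - sigma_inv k (n %/ 2)).-1 =
            (sigma_inv k (n %/ 2)).-1 by lia.
  rewrite -IHk; last lia.
  rewrite /cyc_succ; have [->|ne_n] := eqVneq n (2 ^ k.+1).
    by rewrite e mulKn // eqxx.
  rewrite ifF; last lia.
  by rewrite sigma_invS /= (negbTE even_n); congr sigma_inv; lia.
Qed.

Lemma Pmat_fun_mx (R : nzRingType) k : Pmat R k = fun_mx R _ (next_index k).
Proof.
apply/matrixP => i j; rewrite !mxE; congr ((nat_of_bool _)%:R)%R; apply/existsP/eqP.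
- case=> n /andP[/eqP si /eqP sj].
  by move: si; rewrite sigma_inv_cyc_succ ?ltn_ord // -sj => -[].
- move=> ->; have [n n_range sn] := @sigma_inv_onto k j (ltn_ord j).
  have lt_n : n.-1 < 2 ^ k by lia.
  exists (Ordinal lt_n); rewrite /= prednK; last lia.
  by rewrite sigma_inv_cyc_succ // sn !eqxx.
Qed.

Theorem theorem3 (R : nzRingType) (k : nat) : Pmat R k.+1 = Nmat R k.
Proof. by rewrite Pmat_fun_mx /Nmat Naux_fun_mx. Qed.
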